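(* Let $\mathcal{G}=(\mathcal{V},\mathcal{E})$ be a directed graph with activation probabilities $p_{(u,v)}\in[0,1]$ for each edge $(u,v)\in\mathcal{E}$, and let $\mathbf{P}\in[0,1]^{|\mathcal{V}|\times|\mathcal{V}|}$ be the activation probability matrix, whose $(u,v)$-entry is $p_{(u,v)}$ if $(u,v)\in\mathcal{E}$ and $0$ otherwise. Fix a seed set $S\subseteq\mathcal{V}$ and consider the independent cascade process started from $S$. For $i\ge 0$ let $\boldsymbol{\pi}_i\in[0,1]^{|\mathcal{V}|}$ be the row vector whose $x$-entry is $\rho_i(x)$, the probability that node $x$ is infected at some step $\le i$. Then for all $i\geq 2$, $$\boldsymbol{\pi}_i \le \mathbf{u}_i := \boldsymbol{\pi}_{i-1} + (\boldsymbol{\pi}_{i-1}-\boldsymbol{\pi}_{i-2})\mathbf{P}$$ entrywise, i.e., for every $v\in\mathcal{V}$, $\rho_i(v)\le \rho_{i-1}(v)+\sum_{u:(u,v)\in\mathcal{E}}(\rho_{i-1}(u)-\rho_{i-2}(u))\,p_{(u,v)}$.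
   Context: Independent cascade (IC) model: at step $0$ exactly the seed nodes in $S$ are infected. Whenever a node $u$ becomes newly infected at step $t$, it makes a single attempt, independently of everything else, to infect each out-neighbor $v$ (with $(u,v)\in\mathcal{E}$), succeeding with probability $p_{(u,v)}$; an uninfected $v$ infected by such a success becomes infected at step $t+1$. Infected nodes stay infected, and the process stops when no new nodes are infected. $\rho_i(x)$ denotes the probability that $x$ is infected during the first $i$ steps (steps $0,\dots,i$). *)

From HB Require Import structures.
From mathcomp Require Import all_boot all_order all_algebra.
Set Implicit Arguments. Unset Strict Implicit. Unset Printing Implicit Defensive.
Import Order.TTheory GRing.Theory Num.Theory.
Local Open Scope ring_scope.

Section IC.
Variables (R : realFieldType) (V : finType).
Variables (E : rel V) (p : V -> V -> R) (S : {set V}).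

Definition Pmat (u v : V) : R := if E u v then p u v else 0.

(* An outcome of all the independent attempts: one coin per ordered pair
   (u,v); coin (u,v) = true means "u's single attempt on v succeeds". *)
Definition coins := {ffun V * V -> bool}.

Definition coin_weight (c : coins) : R :=
  \prod_(e : V * V) (if c e then Pmat e.1 e.2 else 1 - Pmat e.1 e.2).

(* (set infected up to step n-1, set infected up to step n) *)
Fixpoint ic_state (c : coins) (n : nat) : {set V} * {set V} :=
  match n with
  | 0 => (set0, S)
  | n'.+1 =>
      let: (A, B) := ic_state c n' in
      (B, B :|: [set v | [exists u, [&& u \in B :\: A, E u v & c (u, v)]]])
  end.

Definition infected (c : coins) (n : nat) : {set V} := (ic_state c n).2.

Definition rho (i : nat) (x : V) : R :=
  \sum_(c : coins) coin_weight c * (x \in infected c i)%:R.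

End IC.

(** A node [v] newly infected at step [i] was reached by a successful coin
    [(u, v)] from some [u] newly infected at step [i-1], so by the union bound
    [rho_i(v) - rho_(i-1)(v)] is at most the sum over in-neighbours [u] of the
    probability that [u] is newly infected at step [i-1] and coin [(u, v)]
    succeeds.  Until [u] is infected the cascade never reads a coin leaving
    [u], so that event is independent of coin [(u, v)] and its probability
    factors as [(rho_(i-1)(u) - rho_(i-2)(u)) * p_(u,v)]. *)

From HB Require Import structures.
From mathcomp Require Import all_boot all_order all_algebra.
Set Implicit Arguments. Unset Strict Implicit. Unset Printing Implicit Defensive.
Import Order.TTheory GRing.Theory Num.Theory.
Local Open Scope ring_scope.

Section Cascade.
Variables (V : finType) (E : rel V) (S : {set V}).
Implicit Types (c : coins V) (n : nat) (u v : V).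

Local Notation state := (ic_state E S).
Local Notation infected := (infected E S).

Definition frontier c n : {set V} := (state c n).2 :\: (state c n).1.

Lemma ic_state_fst c n : (state c n.+1).1 = infected c n.
Proof. by rewrite /infected /=; case: (state c n). Qed.

Lemma infected_S c n :
  infected c n.+1 =
  infected c n :|: [set v | [exists u, [&& u \in frontier c n, E u v & c (u, v)]]].
Proof. by rewrite /infected /frontier /=; case: (state c n). Qed.

Lemma ic_state_sub c n : (state c n).1 \subset (state c n).2.
Proof.
case: n => [|n]; first exact: sub0set.
by rewrite ic_state_fst -[(state c n.+1).2]/(infected c n.+1) infected_S subsetUl.
Qed.

Lemma frontier_S c n : frontier c n.+1 = infected c n.+1 :\: infected c n.
Proof. by rewrite /frontier ic_state_fst. Qed.

Definition agree_off_source u c c' := forall e, e.1 != u -> c e = c' e.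

Lemma ic_state_agree u c c' n :
  agree_off_source u c c' -> u \notin (state c n).1 -> state c n = state c' n.
Proof.
move=> cc'; elim: n => [//|n IHn].
rewrite ic_state_fst => u_not_inf.
have u_not_fst : u \notin (state c n).1.
  by apply: contra u_not_inf; apply: (subsetP (ic_state_sub c n)).
have /= := IHn u_not_fst; rewrite /infected in u_not_inf.
case: (state c n) u_not_inf => A B /= u_notB <-.
congr pair; apply/setP => x; rewrite !inE; congr (_ || _).
apply: eq_existsb => w; case: (boolP (w \in B :\: A)) => //= /setDP[wB _].
by rewrite cc' //=; apply: contraNneq u_notB => <-.
Qed.

Lemma frontier_agree u c c' n :
  agree_off_source u c c' -> (u \in frontier c n) = (u \in frontier c' n).
Proof.
move=> cc'; have c'c : agree_off_source u c' c by move=> e /cc' ->.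
have [u_c|u_c] := boolP (u \in (state c n).1); last first.
  by rewrite /frontier (ic_state_agree cc' u_c).
have [u_c'|u_c'] := boolP (u \in (state c' n).1); first by rewrite !inE u_c u_c'.
by rewrite /frontier (ic_state_agree c'c u_c').
Qed.

Lemma newly_infected_le (R : numDomainType) c n v :
  ((v \in infected c n.+1)%:R - (v \in infected c n)%:R : R)
  <= \sum_(u | E u v) (u \in frontier c n)%:R * (c (u, v))%:R.
Proof.
have sum_ge0 (P : pred V) :
    0 <= \sum_(u | P u) ((u \in frontier c n)%:R * (c (u, v))%:R : R).
  by apply: sumr_ge0 => u _; rewrite mulr_ge0.
rewrite infected_S inE.
case: (v \in infected c n); first by rewrite subrr sum_ge0.
rewrite inE subr0 /=; case: existsP => [[u /and3P[u_fr Euv cuv]]|_]; last exact: sum_ge0.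
by rewrite (bigD1 u) //= u_fr cuv mulr1 lerDl sum_ge0.
Qed.

End Cascade.

Section Expectation.
Variables (R : realFieldType) (V : finType) (E : rel V) (p : V -> V -> R).
Hypothesis p_prob : forall u v, E u v -> 0 <= p u v <= 1.
Implicit Types (c : coins V) (f g : coins V -> R).

Local Notation Pm := (Pmat E p).
Local Notation weight := (coin_weight E p).

Definition expect f : R := \sum_c weight c * f c.

Lemma expectB f g : expect (fun c => f c - g c) = expect f - expect g.
Proof. by rewrite -sumrB; apply: eq_bigr => c _; rewrite mulrBr. Qed.

Lemma expect_sum (I : finType) (P : pred I) (F : I -> coins V -> R) :
  expect (fun c => \sum_(i | P i) F i c) = \sum_(i | P i) expect (F i).
Proof.
rewrite /expect exchange_big /=; apply: eq_bigr => c _; exact: mulr_sumr.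
Qed.

Lemma coin_weight_ge0 c : 0 <= weight c.
Proof.
apply: prodr_ge0 => -[u v] _; rewrite /Pmat /=.
case: (boolP (E u v)) => [/p_prob/andP[p_ge0 p_le1]|_]; case: (c _) => //.
- by rewrite subr_ge0.
- by rewrite subr0.
Qed.

Lemma ler_expect f g : (forall c, f c <= g c) -> expect f <= expect g.
Proof. by move=> fg; apply: ler_sum => c _; rewrite ler_wpM2l ?coin_weight_ge0. Qed.

Lemma expect_coin_indep e0 g :
  (forall c c', (forall e, e != e0 -> c e = c' e) -> g c = g c') ->
  expect (fun c => g c * (c e0)%:R) = Pm e0.1 e0.2 * expect g.
Proof.
move=> g_indep.
pose factor c e := if c e then Pm e.1 e.2 else 1 - Pm e.1 e.2.
pose rest c := \prod_(e | e != e0) factor c e.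
have weightE c : weight c = factor c e0 * rest c by rewrite /coin_weight (bigD1 e0).
pose flip c : coins V := [ffun e => if e == e0 then ~~ c e0 else c e].
have flipK : involutive flip.
  by move=> c; apply/ffunP => e; rewrite !ffunE; case: eqP => [->|//]; rewrite eqxx negbK.
have flip_off c e : e != e0 -> flip c e = c e by rewrite ffunE => /negbTE ->.
have flip_e0 c : flip c e0 = ~~ c e0 by rewrite ffunE eqxx.
have rest_flip c : rest (flip c) = rest c.
  by apply: eq_bigr => e /flip_off; rewrite /factor => ->.
have g_flip c : g (flip c) = g c by apply: g_indep => e /flip_off.
set q := Pm e0.1 e0.2.
have w_true c : c e0 -> weight c * g c = q * (rest c * g c).
  by move=> ce0; rewrite weightE /factor ce0 mulrA.
have w_flip c : c e0 -> weight (flip c) * g (flip c) = (1 - q) * (rest c * g c).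
  by move=> ce0; rewrite weightE rest_flip g_flip /factor flip_e0 ce0 mulrA.
rewrite /expect (bigID (fun c => c e0)) /= [X in _ + X]big1 => [|c /negbTE->]; last first.
  by rewrite !mulr0.
rewrite addr0 (bigID (fun c => c e0) predT) /=.
rewrite [X in _ * (_ + X)](reindex_inj (inv_inj flipK)) /=.
have -> : \sum_(c : coins V | ~~ flip c e0) weight (flip c) * g (flip c)
          = \sum_(c : coins V | c e0) (1 - q) * (rest c * g c).
  by apply: eq_big => c; rewrite flip_e0 negbK //; apply: w_flip.
rewrite -big_split mulr_sumr; apply: eq_bigr => c ce0 /=.
by rewrite ce0 mulr1 w_true // -mulrDl addrC subrK mul1r.
Qed.

Lemma rhoE (S : {set V}) i x :
  rho E p S i x = expect (fun c => (x \in infected E S c i)%:R).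
Proof. by []. Qed.

Lemma expect_frontier (S : {set V}) n u :
  expect (fun c => (u \in frontier E S c n.+1)%:R) = rho E p S n.+1 u - rho E p S n u.
Proof.
rewrite !rhoE -expectB; apply: eq_bigr => c _; congr (_ * _).
rewrite frontier_S inE.
case: (boolP (u \in infected E S c n)) => [u_inf|_]; last by rewrite subr0.
by rewrite infected_S inE u_inf subrr.
Qed.

End Expectation.

Theorem theorem1 (R : realFieldType) (V : finType) (E : rel V)
  (p : V -> V -> R) (S : {set V})
  (hp : forall u v, E u v -> 0 <= p u v <= 1)
  (i : nat) (hi : (2 <= i)%N) (v : V) :
  rho E p S i v <=
    rho E p S i.-1 v +
    \sum_(u : V | E u v) (rho E p S i.-1 u - rho E p S i.-2 u) * p u v.
Proof.
case: i hi => [|[|n]] // _ /=.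
have frontier_coin u : E u v ->
    expect E p (fun c => (u \in frontier E S c n.+1)%:R * (c (u, v))%:R)
    = (rho E p S n.+1 u - rho E p S n u) * p u v.
  move=> Euv; rewrite expect_coin_indep => [|c c' cc'].
    by rewrite expect_frontier /Pmat Euv mulrC.
  have cc'_off : agree_off_source u c c'.
    by move=> e e1_neq; apply: cc'; apply: contraNneq e1_neq => ->.
  by rewrite (frontier_agree E S n.+1 cc'_off).
rewrite -lerBlDl -(eq_bigr _ frontier_coin) -expect_sum !rhoE -expectB.
by apply: (ler_expect hp) => c; apply: newly_infected_le.
Qed.
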